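(* Let $m\ge2$ and let $f$ be the two-digit base-$m$ Kaprekar map on $X=\{0,\dots,m^2-1\}$. There exists a fixed set $K(x)$ with $|K(x)|=2$ if and only if $5\mid m+1$. In that case such a fixed set is unique.
   Context: For an integer $m\ge2$, $X=\{0,1,\dots,m^2-1\}$, each element written with exactly two base-$m$ digits (leading zeros allowed); $f(x)=D(x)-A(x)$ where $D(x)$ (resp. $A(x)$) has the digits of $x$ in nonincreasing (resp. nondecreasing) order. The step $S(x)$ is the least $s\ge0$ such that $f^{s+t}(x)=f^s(x)$ for some $t\ge1$; $T(x)$ is the least $t\ge1$ with $f^{S(x)+t}(x)=f^{S(x)}(x)$; the fixed set of $x$ is $K(x)=\{f^{S(x)+i}(x):0\le i<T(x)\}$. *)

From mathcomp Require Import all_boot.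
Set Implicit Arguments. Unset Strict Implicit. Unset Printing Implicit Defensive.

Definition kap (m x : nat) : nat :=
  let a := x %/ m in let b := x %% m in
  (maxn a b * m + minn a b) - (minn a b * m + maxn a b).

Definition kit (m s x : nat) : nat := iter s (kap m) x.

Definition periodic_from (m x s : nat) : Prop :=
  exists t, 0 < t /\ kit m (s + t) x = kit m s x.

Definition is_S (m x s : nat) : Prop :=
  periodic_from m x s /\ forall s', s' < s -> ~ periodic_from m x s'.

Definition is_T (m x s t : nat) : Prop :=
  0 < t /\ kit m (s + t) x = kit m s x /\
  forall t', 0 < t' -> t' < t -> kit m (s + t') x <> kit m s x.

(* K is (an enumeration of) the fixed set K(x) = {f^(S(x)+i)(x) : 0 <= i < T(x)} *)
Definition fixed_set (m x : nat) (K : seq nat) : Prop :=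
  exists s t, is_S m x s /\ is_T m x s t /\
    K = [seq kit m (s + i) x | i <- iota 0 t].

From mathcomp Require Import all_boot zify.
Set Implicit Arguments. Unset Strict Implicit. Unset Printing Implicit Defensive.

(* Writing a = x %/ m and b = x %% m for the two digits of x,
   the Kaprekar map is kap m x = |a - b| * (m - 1), so every iterate lies
   among the multiples d * (m - 1), 0 <= d <= m - 1.  For 1 <= d <= m the
   digits of d * (m - 1) are d - 1 and m - d, hence on these multiples kap
   acts on the coefficient d as the "gap" map d |-> |(m + 1) - 2 d|.  An
   elementary computation shows that this gap map has a 2-cycle {d, e}
   exactly when m + 1 = 5 d and e = 3 d (up to swapping), which gives both
   the divisibility condition and the uniqueness of the 2-cycle
   {c (m - 1), 3 c (m - 1)} with c = (m + 1) / 5.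
   Independently, the points of a fixed set K(x) are pairwise distinct
   (by minimality of the period T(x)), so |K(x)| = 2 means precisely that
   K(x) = [p; kap p] for a genuine 2-cycle p <-> kap p of kap. *)

Definition absdiff (a b : nat) : nat := (a - b) + (b - a).

(* kap subtracts the ascending from the descending arrangement of the two
   digits, which leaves |a - b| copies of m - 1. *)
Lemma kapE m x : kap m x = absdiff (x %/ m) (x %% m) * (m - 1).
Proof.
rewrite /kap /absdiff; move: (x %/ m) (x %% m) => a b.
case: (leqP a b) => ab.
- have [c ->] : exists c, b = a + c by exists (b - a); lia.
  rewrite mulnDl mulnBr muln1; lia.
- have [c ->] : exists c, a = b + c by exists (a - b); lia.
  rewrite mulnDl mulnBr muln1; lia.
Qed.

Lemma kap_image m x : 0 < m -> x < m ^ 2 ->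
  exists2 d, d <= m - 1 & kap m x = d * (m - 1).
Proof.
move=> m_gt0 x_lt; rewrite kapE.
have a_lt : x %/ m < m by rewrite ltn_divLR // -expnS.
have b_lt : x %% m < m by rewrite ltn_pmod.
exists (absdiff (x %/ m) (x %% m)) => //.
by move: a_lt b_lt; rewrite /absdiff; move: (x %/ m) (x %% m); lia.
Qed.

(* The digits of d * (m - 1) are d - 1 and m - d, so kap acts on the
   coefficient d by the gap map d |-> |(m + 1) - 2 d|. *)
Lemma kap_multiple m d : 1 <= d <= m ->
  kap m (d * (m - 1)) = absdiff (m + 1) (2 * d) * (m - 1).
Proof.
move=> /andP [d_gt0 d_le]; rewrite kapE.
have -> : d * (m - 1) = (d - 1) * m + (m - d) by rewrite mulnBr; nia.
rewrite divnMDl ?modnMDl ?divn_small ?modn_small ?addn0; try lia.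
congr (_ * _); rewrite /absdiff; lia.
Qed.

Lemma kap0 m : kap m 0 = 0.
Proof. by rewrite kapE div0n mod0n. Qed.

Lemma kit_lt m s x : 0 < m -> x < m ^ 2 -> kit m s x < m ^ 2.
Proof.
move=> m_gt0 x_lt; elim: s => [|s IHs] //=.
have [d d_le ->] := kap_image m_gt0 IHs.
have : d * (m - 1) <= (m - 1) * (m - 1) by rewrite leq_mul2r d_le orbT.
rewrite expnS expn1; nia.
Qed.

Lemma gap_two_cycle n d e : d != e ->
  absdiff n (2 * d) = e -> absdiff n (2 * e) = d ->
  (n = 5 * d /\ e = 3 * d) \/ (n = 5 * e /\ d = 3 * e).
Proof. rewrite /absdiff => /eqP; lia. Qed.

Definition two_cycle (m p q : nat) : Prop := [/\ p != q, kap m p = q & kap m q = p].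

(* The coefficient of m - 1 in the small point of the 2-cycle. *)
Definition cycle_coef (m : nat) : nat := (m + 1) %/ 5.

Lemma two_cycle_points m p q : 2 <= m -> p < m ^ 2 -> q < m ^ 2 ->
  two_cycle m p q ->
  5 %| m + 1 /\
  [:: p; q] =i [:: cycle_coef m * (m - 1); (3 * cycle_coef m) * (m - 1)].
Proof.
move=> m_ge2 p_lt q_lt [pq kp kq].
have m1_gt0 : 0 < m - 1 by lia.
have [dp dp_le ep] := kap_image (ltnW m_ge2) q_lt; rewrite kq in ep.
have [dq dq_le eq] := kap_image (ltnW m_ge2) p_lt; rewrite kp in eq.
have dp_gt0 : 0 < dp.
  by case: dp ep {dp_le} => // ep; move: pq; rewrite -kp ep mul0n kap0 eqxx.
have dq_gt0 : 0 < dq.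
  by case: dq eq {dq_le} => // eq; move: pq; rewrite -kq eq mul0n kap0 eqxx.
have gap_dp : absdiff (m + 1) (2 * dp) = dq.
  apply/eqP; rewrite -(eqn_pmul2r m1_gt0) -kap_multiple -?ep -?eq ?kp //; lia.
have gap_dq : absdiff (m + 1) (2 * dq) = dp.
  apply/eqP; rewrite -(eqn_pmul2r m1_gt0) -kap_multiple -?ep -?eq ?kq //; lia.
have dpq : dp != dq by apply: contraNneq pq => e; rewrite ep eq e.
rewrite ep eq /cycle_coef.
case: (gap_two_cycle dpq gap_dp gap_dq) => [[-> ->]|[-> ->]];
  rewrite mulKn // dvdn_mulr //; split=> // z; rewrite !inE // orbC //.
Qed.

Lemma cycle_coef_two_cycle m : 2 <= m -> 5 %| m + 1 ->
  two_cycle m (cycle_coef m * (m - 1)) ((3 * cycle_coef m) * (m - 1)).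
Proof.
rewrite /cycle_coef => m_ge2 /dvdnP [c m_eq]; rewrite m_eq mulnK //.
split.
- by rewrite eqn_pmul2r; lia.
- by rewrite kap_multiple; [congr (_ * _); rewrite /absdiff | ]; lia.
- by rewrite kap_multiple; [congr (_ * _); rewrite /absdiff | ]; lia.
Qed.

Lemma cycle_point_lt m : 5 %| m + 1 -> cycle_coef m * (m - 1) < m ^ 2.
Proof.
rewrite /cycle_coef expnS expn1 => /dvdnP [c m_eq].
by rewrite m_eq mulnK //; nia.
Qed.

(* The orbit of a periodic point, listed over one minimal period, has no
   repetitions: a coincidence f^i p = f^j p with i < j < t would give the
   shorter period t - (j - i). *)
Lemma orbit_uniq (T : eqType) (f : T -> T) p t :
  iter t f p = p ->
  (forall t', 0 < t' -> t' < t -> iter t' f p != p) ->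
  uniq [seq iter i f p | i <- iota 0 t].
Proof.
move=> per minimal; rewrite map_inj_in_uniq ?iota_uniq //.
have shift i j : i < j < t -> iter i f p = iter j f p -> False.
  move=> /andP [ij jt] e.
  have back : iter (t - j + i) f p = p by rewrite iterD e -iterD subnK // ltnW.
  by move/eqP: back; apply/negP; apply: minimal; lia.
move=> i j; rewrite !mem_iota /= !add0n => it jt e.
by case: (ltngtP i j) => // [ij|ji]; [case: (shift i j) | case: (shift j i)];
  rewrite ?it ?jt ?andbT.
Qed.

Lemma fixed_set_pair m x K : fixed_set m x K -> size (undup K) = 2 ->
  exists2 s, two_cycle m (kit m s x) (kap m (kit m s x)) &
             K = [:: kit m s x; kap m (kit m s x)].
Proof.
move=> [s [t [_ [[t_gt0 [per minimal] ->]]]]] size2.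
set p := kit m s x.
have iterE i : kit m (s + i) x = iter i (kap m) p by rewrite /kit addnC iterD.
have per' : iter t (kap m) p = p by rewrite -iterE.
have minimal' t' : 0 < t' -> t' < t -> iter t' (kap m) p != p.
  by move=> t'_gt0 t'_lt; rewrite -iterE; apply/eqP; apply: minimal.
rewrite (eq_map iterE) in size2 *.
move: size2; rewrite undup_id ?orbit_uniq // size_map size_iota => t2.
exists s; last by rewrite t2.
split=> //; first by rewrite eq_sym; apply: (minimal' 1); rewrite ?t2.
by move: per'; rewrite t2.
Qed.

Lemma two_cycle_fixed_set m p q :
  two_cycle m p q -> fixed_set m p [:: p; q].
Proof.
move=> [pq kp kq]; exists 0, 2.
have per : kit m 2 p = p by rewrite /kit /= kp kq.
split; last split; last by rewrite /= /kit /= kp.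
- by split=> [|s']; [exists 2 | rewrite ltn0].
- split=> //; split=> // t' t'_gt0 t'_lt; have -> : t' = 1 by lia.
  by rewrite /kit /= kp; apply/eqP; rewrite eq_sym.
Qed.

Theorem lemma3p3p4 (m : nat) (hm : 2 <= m) :
  ((exists x K, x < m ^ 2 /\ fixed_set m x K /\ size (undup K) = 2)
     <-> 5 %| m + 1)
  /\
  (forall x y K L, x < m ^ 2 -> y < m ^ 2 ->
     fixed_set m x K -> fixed_set m y L ->
     size (undup K) = 2 -> size (undup L) = 2 -> K =i L).
Proof.
have m_gt0 : 0 < m by lia.
have canonical x K : x < m ^ 2 -> fixed_set m x K -> size (undup K) = 2 ->
    5 %| m + 1 /\ K =i [:: cycle_coef m * (m - 1); (3 * cycle_coef m) * (m - 1)].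
  move=> x_lt fixK size2; have [s cyc ->] := fixed_set_pair fixK size2.
  exact: two_cycle_points hm (kit_lt s m_gt0 x_lt) (kit_lt s.+1 m_gt0 x_lt) cyc.
split; [split|].
- by move=> [x [K [x_lt [fixK size2]]]]; case: (canonical x K).
- move=> dvd5; have cyc := cycle_coef_two_cycle hm dvd5.
  exists (cycle_coef m * (m - 1)), [:: cycle_coef m * (m - 1); 3 * cycle_coef m * (m - 1)].
  split; first exact: cycle_point_lt.
  split; first exact: two_cycle_fixed_set.
  by case: cyc => ne _ _; rewrite /= inE (negbTE ne).
- move=> x y K L x_lt y_lt fixK fixL sizeK sizeL z.
  by case: (canonical x K) => // _ ->; case: (canonical y L) => // _ ->.
Qed.
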